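(* Let $\mathbf{f}\colon\mathbb{R}^n\to\mathbb{R}^n$ be a polynomial vector field, $\mathcal{X}_0=\{\mathbf{x}\mid \mathcal{I}(\mathbf{x})\le 0\}$ and $\mathcal{X}_u=\{\mathbf{x}\mid\mathcal{U}(\mathbf{x})\le 0\}$ with $\mathcal{I},\mathcal{U}\in\mathbb{R}[\mathbf{x}]$, and let $B\in\mathbb{R}[\mathbf{x}]$. Suppose there exist $\epsilon>0$, polynomials $v_{i,j}\in\mathbb{R}[\mathbf{x}]$ ($1\le i\le N_{B,\mathbf{f}}$, $0\le j\le i-1$) and sum-of-squares polynomials $\sigma,\sigma'$ such that (1) $-B(\mathbf{x})+\sigma(\mathbf{x})\mathcal{I}(\mathbf{x})$ is SOS; (2) for all $1\le i\le N_{B,\mathbf{f}}$, $-\mathcal{L}^i_{\mathbf{f}}B(\mathbf{x})+\sum_{j=0}^{i-1}v_{i,j}(\mathbf{x})\mathcal{L}^j_{\mathbf{f}}B(\mathbf{x})$ is SOS; (3) $B(\mathbf{x})+\sigma'(\mathbf{x})\mathcal{U}(\mathbf{x})-\epsilon$ is SOS. Then $B$ is an invariant barrier certificate of $\dot{\mathbf{x}}=\mathbf{f}(\mathbf{x})$ with respect to $\mathcal{X}_0$ and $\mathcal{X}_u$.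
   Context: A polynomial is SOS (sum of squares) if it equals $\sum_k g_k^2$ for some polynomials $g_k$. The Lie derivatives of $B$ along $\mathbf{f}$ are $\mathcal{L}^0_{\mathbf{f}}B=B$ and $\mathcal{L}^k_{\mathbf{f}}B=\langle \nabla \mathcal{L}^{k-1}_{\mathbf{f}}B,\mathbf{f}\rangle$ for $k>0$. $N_{B,\mathbf{f}}\in\mathbb{N}^+$ denotes the completeness threshold: the minimal index $i$ such that $\mathcal{L}^{i+1}_{\mathbf{f}}B$ belongs to the polynomial ideal generated by $\mathcal{L}^0_{\mathbf{f}}B,\dots,\mathcal{L}^i_{\mathbf{f}}B$. A polynomial $B$ is an invariant barrier certificate (w.r.t. $\mathcal{X}_0,\mathcal{X}_u$) iff (initial) $B(\mathbf{x})\le 0$ for all $\mathbf{x}\in\mathcal{X}_0$; (consecution) for all $\mathbf{x}\in\mathbb{R}^n$ and all $1\le i\le N_{B,\mathbf{f}}$: if $\mathcal{L}^j_{\mathbf{f}}B(\mathbf{x})=0$ for all $0\le j\le i-1$, then $\mathcal{L}^i_{\mathbf{f}}B(\mathbf{x})\le 0$; (separation) $B(\mathbf{x})>0$ for all $\mathbf{x}\in\mathcal{X}_u$. *)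

From mathcomp Require Import all_boot all_order all_algebra.
From mathcomp Require Import mpoly.
Set Implicit Arguments. Unset Strict Implicit. Unset Printing Implicit Defensive.
Import Order.TTheory GRing.Theory Num.Theory.
Local Open Scope ring_scope.

Section Defs.
Variables (R : realFieldType) (n : nat).
Local Notation P := {mpoly R[n]}.

Definition is_SOS (p : P) : Prop :=
  exists s : seq P, p = \sum_(g <- s) g ^+ 2.

Definition lie (f : 'I_n -> P) (B : P) : P :=
  \sum_(i < n) mderiv i B * f i.

Definition lieN (f : 'I_n -> P) (k : nat) (B : P) : P := iter k (lie f) B.

Definition in_lie_ideal (f : 'I_n -> P) (B : P) (i : nat) (p : P) : Prop :=
  exists c : nat -> P, p = \sum_(j < i.+1) c j * lieN f j B.

Definition completeness_threshold (f : 'I_n -> P) (B : P) (N : nat) : Prop :=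
  (0 < N)%N /\ in_lie_ideal f B N (lieN f N.+1 B) /\
  (forall i : nat, (0 < i)%N -> in_lie_ideal f B i (lieN f i.+1 B) -> (N <= i)%N).

Definition invariant_barrier (f : 'I_n -> P) (I U B : P) (N : nat) : Prop :=
  (forall x : 'I_n -> R, meval x I <= 0 -> meval x B <= 0) /\
  (forall x : 'I_n -> R, forall i : nat, (1 <= i <= N)%N ->
     (forall j : nat, (j <= i.-1)%N -> meval x (lieN f j B) = 0) ->
     meval x (lieN f i B) <= 0) /\
  (forall x : 'I_n -> R, meval x U <= 0 -> 0 < meval x B).

End Defs.

From mathcomp Require Import all_boot all_order all_algebra.
From mathcomp Require Import mpoly.
Set Implicit Arguments. Unset Strict Implicit. Unset Printing Implicit Defensive.
Import Order.TTheory GRing.Theory Num.Theory.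
Local Open Scope ring_scope.

(* A sum of squares is nonnegative at every point. Evaluating each certificate
   at a point x therefore yields a sign condition: where [g x <= 0] and the
   multiplier [s] is SOS, [p + s g] SOS forces [p x >= 0]; where the earlier Lie
   derivatives vanish, the ideal combination disappears and [-L^i B (x) >= 0].
   Soundness is pointwise. *)

Section SOSCertificates.
Variables (R : realFieldType) (n : nat).
Implicit Types (p q g s : {mpoly R[n]}) (x : 'I_n -> R).

Lemma meval_SOS_ge0 x p : is_SOS p -> 0 <= meval x p.
Proof.
case=> gs ->; rewrite rmorph_sum /=.
by apply: sumr_ge0 => g _; rewrite rmorphXn /= sqr_ge0.
Qed.

Lemma SOS_multiplier_ge0 x p s g :
  is_SOS s -> is_SOS (p + s * g) -> meval x g <= 0 -> 0 <= meval x p.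
Proof.
move=> /(meval_SOS_ge0 x) s_ge0 /(meval_SOS_ge0 x) + g_le0.
rewrite mevalD mevalM => /le_trans; apply.
by rewrite gerDl mulr_ge0_le0.
Qed.

Lemma SOS_ideal_combination_le0 x q i (c p : nat -> {mpoly R[n]}) :
  is_SOS (- q + \sum_(j < i) c j * p j) ->
  (forall j, (j < i)%N -> meval x (p j) = 0) -> meval x q <= 0.
Proof.
move=> /(meval_SOS_ge0 x) + p0.
rewrite mevalD mevalN rmorph_sum /= big1 ?addr0 ?oppr_ge0 // => j _.
by rewrite mevalM p0 ?mulr0.
Qed.

End SOSCertificates.

Theorem theorem5 (R : realFieldType) (n : nat)
    (f : 'I_n -> {mpoly R[n]}) (I U B : {mpoly R[n]}) (N : nat)
    (hN : completeness_threshold f B N)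
    (eps : R) (v : nat -> nat -> {mpoly R[n]}) (sigma sigma' : {mpoly R[n]}) :
  0 < eps ->
  is_SOS sigma -> is_SOS sigma' ->
  is_SOS (- B + sigma * I) ->
  (forall i : nat, (1 <= i <= N)%N ->
     is_SOS (- lieN f i B + \sum_(j < i) v i j * lieN f j B)) ->
  is_SOS (B + sigma' * U - eps%:MP) ->
  invariant_barrier f I U B N.
Proof.
move=> eps_gt0 sos_sigma sos_sigma' init consec sep; split; [|split].
- move=> x xI; rewrite -oppr_ge0 -mevalN.
  exact: SOS_multiplier_ge0 sos_sigma init xI.
- move=> x i /consec cert vanish; apply: SOS_ideal_combination_le0 cert _.
  move=> j lt_ji; apply: vanish.
  by rewrite -ltnS (ltn_predK lt_ji).
- move=> x xU; rewrite addrAC in sep.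
  have := SOS_multiplier_ge0 sos_sigma' sep xU.
  by rewrite mevalB mevalC subr_ge0; apply: lt_le_trans.
Qed.
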